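(* Let $f:[0,T]\times\mathbb{R}\times\mathbb{R}\to\mathbb{R}$ be continuous and suppose there is a constant $c$ with $|f(t,x,y)|\le c<\frac{a}{2T}$ for all $(t,x,y)\in[0,T]\times\mathbb{R}\times\mathbb{R}$. Then the problem $$(\varphi(u'))'=f(t,u,u')\ \text{on }[0,T],\qquad u(T)=u(0)=u'(T)$$ has at least one solution.
   Context: $T>0$, $a>0$, and $\varphi:\mathbb{R}\to(-a,a)$ is a homeomorphism with $\varphi(0)=0$. A solution is a function $u\in C^1([0,T],\mathbb{R})$ satisfying the boundary conditions such that $\varphi\circ u'$ is continuously differentiable and the equation holds for all $t\in[0,T]$. *)

From Stdlib Require Import Reals Lra.
Open Scope R_scope.

Definition continuous_on_interval (g : R -> R) (a b : R) : Prop :=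
  forall t, a <= t <= b ->
  forall eps, 0 < eps -> exists delta, 0 < delta /\
    forall s, a <= s <= b -> Rabs (s - t) < delta -> Rabs (g s - g t) < eps.

Definition has_derivative_on_interval (g g' : R -> R) (a b : R) : Prop :=
  forall t, a <= t <= b ->
  forall eps, 0 < eps -> exists delta, 0 < delta /\
    forall s, a <= s <= b -> s <> t -> Rabs (s - t) < delta ->
      Rabs ((g s - g t) / (s - t) - g' t) < eps.

Definition homeomorphism_onto_interval (phi : R -> R) (a : R) : Prop :=
  continuity phi /\
  (forall x, - a < phi x < a) /\
  exists psi : R -> R,
    (forall x, psi (phi x) = x) /\
    (forall y, - a < y < a -> phi (psi y) = y) /\
    (forall y, - a < y < a -> continuity_pt psi y).

Definition continuous_on_strip (f : R -> R -> R -> R) (T : R) : Prop :=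
  forall t x y, 0 <= t <= T ->
  forall eps, 0 < eps -> exists delta, 0 < delta /\
    forall t' x' y', 0 <= t' <= T -> Rabs (t' - t) < delta ->
      Rabs (x' - x) < delta -> Rabs (y' - y) < delta ->
      Rabs (f t' x' y' - f t x y) < eps.

Definition is_solution (phi : R -> R) (f : R -> R -> R -> R) (T : R)
    (u : R -> R) : Prop :=
  exists du w : R -> R,
    has_derivative_on_interval u du 0 T /\
    continuous_on_interval du 0 T /\
    has_derivative_on_interval (fun t => phi (du t)) w 0 T /\
    continuous_on_interval w 0 T /\
    (forall t, 0 <= t <= T -> w t = f t (u t) (du t)) /\
    u T = u 0 /\ u 0 = du T.

(* With v = phi (u') and psi = phi^-1 the problem becomes the first-order system
   u' = psi v, v' = f (t, u, psi v) with u T = psi (v T) and u 0 = u T.  Since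
   |v'| <= c, a solution with |v T| <= c T keeps |v| <= 2 c T < a, so psi may be
   replaced by its clamp to a segment [-r, r] inside (-a, a), which is bounded and
   continuous on all of R.  The explicit Euler scheme with mesh T / (N + 1), run
   backwards from v T = w, keeps v of the sign of w when w = c T or w = - c T; the
   defect u(0) - u(T) is then of opposite signs at the two ends, so some shot w_N
   makes the discrete solution periodic (intermediate value theorem).  The
   discrete solutions are uniformly bounded, so by Tychonoff they have a cluster
   point (u, v) in R^([0,T]); near it, at any two times, lie arbitrarily fine
   schemes, and the Euler increments force the difference quotients of (u, v) to
   converge to the right-hand side of the system. *)

From Stdlib Require Import Reals Lra Lia ZArith List ClassicalEpsilon.
From mathcomp Require all_boot all_order all_algebra all_classical all_reals all_analysis.
From mathcomp Require Rstruct Rstruct_topology.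

Module PointwiseCluster.
Import all_boot all_order all_algebra all_classical all_reals all_analysis Rstruct Rstruct_topology.
Import numFieldNormedType.Exports ArrowAsProduct.
Local Open Scope classical_set_scope.
Local Open Scope ring_scope.

(* Tychonoff: the sequence lives in the compact cube [-M, M]^I, so it has a
   cluster point for the product topology. *)
Lemma exists_cluster_point (I : Type) (g : nat -> I -> R) (M : R) :
  (forall n i, Rle (Rabs (g n i)) M) ->
  exists p : I -> R, forall (l : list I) (eps : R) (N0 : nat), Rlt 0 eps ->
    exists n, (N0 <= n)%coq_nat /\
      forall i, List.In i l -> Rlt (Rabs (Rminus (g n i) (p i))) eps.
Proof.
move=> gM.
set K := [set f : forall i : {classic I}, R | forall i, `[-M, M]%classic (f i)].
have cK : compact K := tychonoff (fun _ => @segment_compact R (-M) M).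
have KG : (g @ \oo) K.
  apply: (@filterE _ _ _ (g @^-1` K)) => n i /=; rewrite in_itv /=.
  have := gM n i; have := Rle_abs (g n i); have := Rle_abs (Ropp (g n i)).
  rewrite Rabs_Ropp => h1 h2 h3.
  by apply/andP; split; apply/RleP; [change (- M)%R with (Ropp M)|]; lra.
have [p [_ p_cluster]] := cK _ (fmap_proper_filter g _) KG.
exists p => l eps N0 eps_gt0.
have near_p : nbhs p
    [set f : I -> R | forall i, List.In i l -> Rlt (Rabs (Rminus (f i) (p i))) eps].
  elim: l => [|j l IHl]; first by apply: (filterS _ filterT) => f _ i [].
  have near_j : nbhs p [set f : I -> R | Rlt (Rabs (Rminus (f j) (p j))) eps].
    have near_pj : nbhs (p j) (ball (p j) eps) by apply: nbhsx_ballx; apply/RltP.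
    have near_proj : nbhs p ((@proj {classic I} (fun _ => R) j) @^-1` ball (p j) eps) :=
      @proj_continuous {classic I} (fun _ => R) j p _ near_pj.
    by apply: filterS near_proj => f; rewrite /ball /= /proj => /RltP; rewrite Rabs_minus_sym.
  by apply: filterS (filterI near_j IHl) => f [fj fl] i [<-|/fl].
have tail : (g @ \oo) (g @` [set n | (N0 <= n)%N]).
  by apply: filterS (nbhs_infty_ge N0) => n /= n_ge; exists n.
have [f [[n n_ge <-] close]] := p_cluster _ _ tail near_p.
by exists n; split => //; apply/ssrnat.leP.
Qed.
End PointwiseCluster.

Open Scope R_scope.

Ltac split_Rabs := repeat (match goal with
  | |- context [Rabs ?x] => unfold Rabs at 1; destruct (Rcase_abs x)
  | H : context [Rabs ?x] |- _ => unfold Rabs in H; destruct (Rcase_abs x)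
  end); try lra.

Lemma Rabs_le_between x y : Rabs x <= y -> - y <= x <= y.
Proof. split_Rabs. Qed.

Lemma eq_of_dist_small a b : (forall e, 0 < e -> Rabs (a - b) <= e) -> a = b.
Proof.
intros H. assert (Rabs (a - b) <= 0).
{ apply Rle_plus_epsilon. intros e He. rewrite Rplus_0_l. auto. }
split_Rabs.
Qed.

Lemma Rabs_minus_le x y : Rabs (x - y) <= Rabs x + Rabs y.
Proof. split_Rabs. Qed.

Lemma continuity_pt_eps_delta (g : R -> R) x :
  continuity_pt g x <->
  forall eps, 0 < eps -> exists d, 0 < d /\
    forall y, Rabs (y - x) < d -> Rabs (g y - g x) < eps.
Proof.
split.
- intros Hg eps Heps. destruct (Hg eps Heps) as [d [Hd Hy]].
  exists d; split; [lra|]. intros y Hyx.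
  destruct (Req_dec y x) as [->|Hne].
  + unfold Rminus. rewrite Rplus_opp_r, Rabs_R0. lra.
  + apply Hy. repeat split; auto.
- intros Hg eps Heps. destruct (Hg eps Heps) as [d [Hd Hy]].
  exists d; split; [lra|]. intros y [_ Hyx]. now apply Hy.
Qed.

Definition continuous3 (G : R -> R -> R -> R) : Prop :=
  forall t x y eps, 0 < eps -> exists d, 0 < d /\ forall t' x' y',
    Rabs (t' - t) < d -> Rabs (x' - x) < d -> Rabs (y' - y) < d ->
    Rabs (G t' x' y' - G t x y) < eps.

Lemma continuity_comp3 (G : R -> R -> R -> R) (g1 g2 : R -> R) t :
  continuous3 G -> continuity g1 -> continuity g2 ->
  continuity (fun w => G t (g1 w) (g2 w)).
Proof.
intros HG H1 H2 w. apply continuity_pt_eps_delta. intros eps Heps.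
destruct (HG t (g1 w) (g2 w) eps Heps) as [d [Hd HGd]].
destruct (proj1 (continuity_pt_eps_delta _ _) (H1 w) d Hd) as [d1 [Hd1 Hg1]].
destruct (proj1 (continuity_pt_eps_delta _ _) (H2 w) d Hd) as [d2 [Hd2 Hg2]].
exists (Rmin d1 d2). split; [now apply Rmin_pos|]. intros w' Hw'.
apply HGd.
- unfold Rminus. rewrite Rplus_opp_r, Rabs_R0. lra.
- apply Hg1. eapply Rlt_le_trans; [exact Hw'| apply Rmin_l].
- apply Hg2. eapply Rlt_le_trans; [exact Hw'| apply Rmin_r].
Qed.

Lemma continuous_on_interval_comp3 (G : R -> R -> R -> R) (g1 g2 : R -> R) a b :
  continuous3 G -> continuous_on_interval g1 a b -> continuous_on_interval g2 a b ->
  continuous_on_interval (fun t => G t (g1 t) (g2 t)) a b.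
Proof.
intros HG H1 H2 t Ht eps Heps.
destruct (HG t (g1 t) (g2 t) eps Heps) as [d [Hd HGd]].
destruct (H1 t Ht d Hd) as [d1 [Hd1 Hg1]].
destruct (H2 t Ht d Hd) as [d2 [Hd2 Hg2]].
exists (Rmin d (Rmin d1 d2)). split; [repeat apply Rmin_pos; auto|].
intros s Hs Hst.
pose proof (Rmin_l d (Rmin d1 d2)). pose proof (Rmin_r d (Rmin d1 d2)).
pose proof (Rmin_l d1 d2). pose proof (Rmin_r d1 d2).
apply HGd; [lra| apply Hg1 | apply Hg2]; auto; lra.
Qed.

(* Near t the derivative bounds the growth: |g s - g t| <= (|g' t| + 1) |s - t|. *)
Lemma derivative_continuous (g g' : R -> R) a b :
  has_derivative_on_interval g g' a b -> continuous_on_interval g a b.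
Proof.
intros Hg t Ht eps Heps.
set (L := Rabs (g' t) + 1).
assert (HL : 0 < L) by (unfold L; pose proof (Rabs_pos (g' t)); lra).
destruct (Hg t Ht 1 Rlt_0_1) as [d [Hd Hq]].
exists (Rmin d (eps / L)). split; [apply Rmin_pos; auto; apply Rdiv_lt_0_compat; lra|].
intros s Hs Hst.
destruct (Req_dec s t) as [->|Hne].
{ unfold Rminus. rewrite Rplus_opp_r, Rabs_R0. lra. }
assert (Hst0 : s - t <> 0) by lra.
assert (Hq' := Hq s Hs Hne (Rlt_le_trans _ _ _ Hst (Rmin_l _ _))).
assert (Hgrowth : Rabs (g s - g t) <= L * Rabs (s - t)).
{ replace (g s - g t) with ((g s - g t) / (s - t) * (s - t)) by (field; auto).
  rewrite Rabs_mult. apply Rmult_le_compat_r; [apply Rabs_pos|].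
  unfold L. pose proof (Rabs_triang_inv ((g s - g t) / (s - t)) (g' t)). lra. }
assert (L * Rabs (s - t) < L * (eps / L)).
{ apply Rmult_lt_compat_l; auto. eapply Rlt_le_trans; [exact Hst| apply Rmin_r]. }
replace (L * (eps / L)) with eps in * by (field; lra). lra.
Qed.

Lemma sign_preserving (g : R -> R) x y :
  continuity g -> (forall z, g z = 0 -> z = 0) -> 0 < x * y -> 0 < g x * g y.
Proof.
intros Hg Hg0 Hxy. destruct (Rlt_le_dec 0 (g x * g y)) as [|Hle]; auto. exfalso.
destruct (Rle_dec x y) as [Hxy'|Hxy'].
- destruct (IVT_cor g x y Hg Hxy' Hle) as [z [Hz Hgz]].
  apply Hg0 in Hgz. subst z. nra.
- rewrite Rmult_comm in Hle.
  destruct (IVT_cor g y x Hg ltac:(lra) Hle) as [z [Hz Hgz]].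
  apply Hg0 in Hgz. subst z. nra.
Qed.

Lemma bounded_on_segment (g : R -> R) lo hi :
  lo <= hi -> (forall z, lo <= z <= hi -> continuity_pt g z) ->
  exists K, 0 <= K /\ forall z, lo <= z <= hi -> Rabs (g z) <= K.
Proof.
intros Hlh Hg.
destruct (continuity_ab_maj g lo hi Hlh Hg) as [zmax [Hmax _]].
destruct (continuity_ab_min g lo hi Hlh Hg) as [zmin [Hmin _]].
exists (Rabs (g zmax) + Rabs (g zmin)).
split; [pose proof (Rabs_pos (g zmax)); pose proof (Rabs_pos (g zmin)); lra|].
intros z Hz. specialize (Hmax z Hz). specialize (Hmin z Hz). split_Rabs.
Qed.

Definition clamp (lo hi x : R) : R := Rmax lo (Rmin hi x).

Lemma clamp_between lo hi x : lo <= hi -> lo <= clamp lo hi x <= hi.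
Proof. intros. unfold clamp, Rmax, Rmin. repeat destruct Rle_dec; lra. Qed.

Lemma clamp_id lo hi x : lo <= x <= hi -> clamp lo hi x = x.
Proof. intros. unfold clamp, Rmax, Rmin. repeat destruct Rle_dec; lra. Qed.

Lemma clamp_eq0 lo hi x : lo < 0 < hi -> clamp lo hi x = 0 -> x = 0.
Proof. intros. unfold clamp, Rmax, Rmin in *. repeat destruct Rle_dec; lra. Qed.

Lemma clamp_lipschitz lo hi x y :
  lo <= hi -> Rabs (clamp lo hi x - clamp lo hi y) <= Rabs (x - y).
Proof. intros. unfold clamp, Rmax, Rmin. repeat destruct Rle_dec; split_Rabs. Qed.

Lemma continuity_clamp_comp (g : R -> R) lo hi :
  lo <= hi -> (forall z, lo <= z <= hi -> continuity_pt g z) ->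
  continuity (fun x => g (clamp lo hi x)).
Proof.
intros Hlh Hg x. apply continuity_pt_eps_delta. intros eps Heps.
destruct (proj1 (continuity_pt_eps_delta _ _) (Hg _ (clamp_between lo hi x Hlh)) eps Heps)
  as [d [Hd Hgd]].
exists d. split; auto. intros y Hy. apply Hgd.
eapply Rle_lt_trans; [apply clamp_lipschitz|]; eauto.
Qed.

Lemma continuous3_clamp (f : R -> R -> R -> R) T :
  0 <= T -> continuous_on_strip f T -> continuous3 (fun t => f (clamp 0 T t)).
Proof.
intros HT Hf t x y eps Heps.
destruct (Hf (clamp 0 T t) x y (clamp_between 0 T t HT) eps Heps) as [d [Hd Hfd]].
exists d. split; auto. intros t' x' y' Ht Hx Hy. apply Hfd; auto.
- apply clamp_between; auto.
- eapply Rle_lt_trans; [apply clamp_lipschitz|]; eauto.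
Qed.

Lemma steps_dist (X : nat -> R) (L : R) :
  (forall j, Rabs (X (S j) - X j) <= L) ->
  forall k j, Rabs (X k - X j) <= Rabs (INR k - INR j) * L.
Proof.
intros HX.
assert (Hfwd : forall j m, Rabs (X (j + m)%nat - X j) <= INR m * L).
{ intros j m. induction m as [|m IH].
  - rewrite Nat.add_0_r. unfold Rminus. rewrite Rplus_opp_r, Rabs_R0. simpl; lra.
  - rewrite Nat.add_succ_r, S_INR.
    replace (X (S (j + m)) - X j) with ((X (S (j + m)) - X (j + m)%nat) + (X (j + m)%nat - X j))
      by ring.
    eapply Rle_trans; [apply Rabs_triang|]. specialize (HX (j + m)%nat). lra. }
intros k j. destruct (le_ge_dec j k) as [Hjk|Hkj].
- replace k with (j + (k - j))%nat at 1 by lia.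
  rewrite <- minus_INR, (Rabs_pos_eq (INR _)) by (auto; apply pos_INR). apply Hfwd.
- replace j with (k + (j - k))%nat at 1 by lia.
  rewrite Rabs_minus_sym, (Rabs_minus_sym (INR k)).
  rewrite <- minus_INR, (Rabs_pos_eq (INR _)) by (auto; apply pos_INR). apply Hfwd.
Qed.

Lemma euler_sum_deviation (X Y : nat -> R) (h D e : R) (k0 m : nat) :
  0 <= h -> (forall j, X (S j) = X j - h * Y j) ->
  (forall j, (k0 <= j < k0 + m)%nat -> Rabs (Y j - D) <= e) ->
  Rabs (X k0 - X (k0 + m)%nat - INR m * h * D) <= INR m * h * e.
Proof.
intros Hh HX. induction m as [|m IH]; intros HY.
- rewrite Nat.add_0_r. simpl.
  replace (X k0 - X k0 - 0 * h * D) with 0 by ring. rewrite Rabs_R0; lra.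
- rewrite Nat.add_succ_r, HX, S_INR.
  specialize (IH (fun j Hj => HY j ltac:(lia))).
  specialize (HY (k0 + m)%nat ltac:(lia)).
  replace (X k0 - (X (k0 + m)%nat - h * Y (k0 + m)%nat) - (INR m + 1) * h * D)
    with ((X k0 - X (k0 + m)%nat - INR m * h * D) + h * (Y (k0 + m)%nat - D)) by ring.
  eapply Rle_trans; [apply Rabs_triang|]. rewrite Rabs_mult, (Rabs_pos_eq h Hh).
  assert (h * Rabs (Y (k0 + m)%nat - D) <= h * e) by (apply Rmult_le_compat_l; auto).
  lra.
Qed.

(* Grid point [k] of mesh [h] sits at time [T - k h]; [s] lies in cell [k]
   when that grid point is the last one at or before [s]. *)
Definition in_cell (T h s : R) (k : nat) : Prop := INR k * h <= T - s < (INR k + 1) * h.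

Definition grid_index (T h s : R) (n : nat) : nat :=
  Nat.min n (Z.to_nat (Int_part ((T - s) / h))).

Lemma grid_index_le T h s n : (grid_index T h s n <= n)%nat.
Proof. apply Nat.le_min_l. Qed.

Lemma grid_index_in_cell T h s n :
  0 < h -> INR n * h = T -> 0 <= s <= T -> in_cell T h s (grid_index T h s n).
Proof.
intros Hh HT Hs. unfold in_cell, grid_index.
set (r := (T - s) / h).
assert (Hr : T - s = r * h) by (unfold r; field; lra).
assert (Hrn : r <= INR n) by nra.
destruct (base_Int_part r) as [B1 B2].
assert (Hz : (0 <= Int_part r)%Z).
{ apply le_IZR. destruct (Z_lt_le_dec (Int_part r) 0) as [Hl|Hl]; [|now apply IZR_le in Hl].
  assert (Int_part r <= -1)%Z by lia. apply IZR_le in H. nra. }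
assert (HI : INR (Z.to_nat (Int_part r)) = IZR (Int_part r)).
{ rewrite INR_IZR_INZ, Z2Nat.id by lia. reflexivity. }
rewrite Nat.min_r by (apply INR_le; lra). rewrite HI, Hr. split; nra.
Qed.

Lemma grid_index_start T h n : 0 < h -> INR n * h = T -> grid_index T h T n = O.
Proof.
intros Hh HT. assert (Hc := grid_index_in_cell T h T n Hh HT).
destruct (grid_index T h T n) as [|k]; auto.
destruct Hc as [Hk _]; [pose proof (pos_INR n); nra|].
rewrite S_INR in Hk. pose proof (pos_INR k). nra.
Qed.

Lemma grid_index_end T h n : 0 < h -> INR n * h = T -> grid_index T h 0 n = n.
Proof.
intros Hh HT. assert (Hc := grid_index_in_cell T h 0 n Hh HT).
assert (Hle := grid_index_le T h 0 n).
destruct Hc as [_ Hk]; [pose proof (pos_INR n); nra|].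
assert (INR n < INR (grid_index T h 0 n) + 1) by nra.
rewrite <- S_INR in H. apply INR_lt in H. lia.
Qed.

Lemma cell_dist T h s t ks kt :
  in_cell T h s ks -> in_cell T h t kt ->
  Rabs (INR kt - INR ks) * h < Rabs (t - s) + h /\
  Rabs ((INR ks - INR kt) * h - (t - s)) < h.
Proof.
unfold in_cell. intros Hs Ht. assert (0 < h) by nra.
rewrite <- (Rabs_pos_eq h) at 1 by lra. rewrite <- Rabs_mult.
rewrite !Rmult_minus_distr_r. rewrite !Rmult_plus_distr_r, !Rmult_1_l in *.
split; apply Rabs_def1; split_Rabs.
Qed.

Lemma cell_between T h s t ks kt j :
  in_cell T h s ks -> in_cell T h t kt -> (Nat.min ks kt <= j <= Nat.max ks kt)%nat ->
  Rabs (INR j - INR ks) * h < Rabs (t - s) + h /\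
  Rabs (T - INR j * h - s) < Rabs (t - s) + 2 * h.
Proof.
intros Hs Ht Hj. destruct (cell_dist T h s t ks kt Hs Ht) as [Hd _].
assert (Hh : 0 < h) by (unfold in_cell in Hs; nra).
assert (Hjk : Rabs (INR j - INR ks) <= Rabs (INR kt - INR ks)).
{ destruct (le_ge_dec kt ks).
  - rewrite Nat.min_r, Nat.max_l in Hj by lia.
    destruct Hj as [Hj1 Hj2]. apply le_INR in Hj1, Hj2. split_Rabs.
  - rewrite Nat.min_l, Nat.max_r in Hj by lia.
    destruct Hj as [Hj1 Hj2]. apply le_INR in Hj1, Hj2. split_Rabs. }
assert (Hj' : Rabs (INR j - INR ks) * h < Rabs (t - s) + h).
{ eapply Rle_lt_trans; [|exact Hd]. apply Rmult_le_compat_r; lra. }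
split; auto. unfold in_cell in Hs.
replace (T - INR j * h - s) with ((T - s - INR ks * h) - (INR j - INR ks) * h) by ring.
rewrite <- (Rabs_pos_eq h) in Hj' at 1 by lra. rewrite <- Rabs_mult in Hj'.
eapply Rle_lt_trans; [apply Rabs_minus_le|]. rewrite Rabs_pos_eq; lra.
Qed.

Lemma euler_increment_ordered (X Y : nat -> R) (x : R -> R) (T h D L eps eta s t : R)
    (ks kt : nat) :
  0 < h -> 0 <= eps -> Rabs D <= L -> (kt <= ks)%nat ->
  (forall j, X (S j) = X j - h * Y j) ->
  (forall j, (kt <= j < ks)%nat -> Rabs (Y j - D) <= eps) ->
  in_cell T h s ks -> in_cell T h t kt ->
  Rabs (X ks - x s) < eta -> Rabs (X kt - x t) < eta ->
  Rabs (x t - x s - D * (t - s)) <= 2 * eta + (Rabs (t - s) + h) * eps + L * h.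
Proof.
intros Hh Heps HD Hk HX HY Hs Ht Hxs Hxt.
destruct (cell_dist T h s t ks kt Hs Ht) as [Hm Hmts].
rewrite (Rabs_minus_sym (INR kt)), Rabs_pos_eq in Hm by (apply le_INR in Hk; lra).
assert (Hsum := euler_sum_deviation X Y h D eps kt (ks - kt) ltac:(lra) HX
  ltac:(intros j Hj; apply HY; lia)).
replace (kt + (ks - kt))%nat with ks in Hsum by lia.
rewrite minus_INR in Hsum by lia.
set (m := (INR ks - INR kt) * h) in *.
assert (Hm0 : 0 <= m) by (unfold m; apply le_INR in Hk; nra).
replace ((INR ks - INR kt) * h * D) with (m * D) in Hsum by (unfold m; ring).
replace ((INR ks - INR kt) * h * eps) with (m * eps) in Hsum by (unfold m; ring).
assert (Hdrift : Rabs (D * (m - (t - s))) <= L * h).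
{ rewrite Rabs_mult. apply Rmult_le_compat; try apply Rabs_pos; lra. }
assert (m * eps <= (Rabs (t - s) + h) * eps).
{ apply Rmult_le_compat_r; lra. }
replace (x t - x s - D * (t - s)) with
  ((x t - X kt) + (X ks - x s) + (X kt - X ks - m * D) + D * (m - (t - s))) by ring.
rewrite Rabs_minus_sym in Hxt.
pose proof (Rabs_triang (x t - X kt) (X ks - x s)).
pose proof (Rabs_triang ((x t - X kt) + (X ks - x s)) (X kt - X ks - m * D)).
pose proof (Rabs_triang ((x t - X kt) + (X ks - x s) + (X kt - X ks - m * D))
  (D * (m - (t - s)))).
lra.
Qed.

Lemma euler_increment (X Y : nat -> R) (x : R -> R) (T h D L eps eta s t : R) (ks kt : nat) :
  0 < h -> 0 <= eps -> Rabs D <= L ->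
  (forall j, X (S j) = X j - h * Y j) ->
  (forall j, (Nat.min ks kt <= j < Nat.max ks kt)%nat -> Rabs (Y j - D) <= eps) ->
  in_cell T h s ks -> in_cell T h t kt ->
  Rabs (X ks - x s) < eta -> Rabs (X kt - x t) < eta ->
  Rabs (x t - x s - D * (t - s)) <= 2 * eta + (Rabs (t - s) + h) * eps + L * h.
Proof.
intros Hh Heps HD HX HY Hs Ht Hxs Hxt.
destruct (le_ge_dec kt ks) as [Hk|Hk].
- apply (euler_increment_ordered X Y x T h D L eps eta s t ks kt); auto.
  intros j Hj. apply HY. lia.
- replace (x t - x s - D * (t - s)) with (- (x s - x t - D * (s - t))) by ring.
  rewrite Rabs_Ropp, (Rabs_minus_sym t).
  apply (euler_increment_ordered X Y x T h D L eps eta t s kt ks); auto.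
  intros j Hj. apply HY. lia.
Qed.

Lemma diff_quotient_lt A D s t eps :
  t <> s -> Rabs (A - D * (t - s)) < eps * Rabs (t - s) -> Rabs (A / (t - s) - D) < eps.
Proof.
intros Hne H. assert (Hts : t - s <> 0) by lra.
assert (Hpos : 0 < Rabs (t - s)) by (apply Rabs_pos_lt; auto).
replace (A / (t - s) - D) with ((A - D * (t - s)) / (t - s)) by (field; auto).
unfold Rdiv. rewrite Rabs_mult, Rabs_inv.
apply (Rmult_lt_reg_r (Rabs (t - s))); auto.
rewrite Rmult_assoc, Rinv_l by lra. lra.
Qed.

Definition system_rhs (Ps : R -> R) (F : R -> R -> R -> R) (b : bool) (t x y : R) : R :=
  if b then Ps y else F t x (Ps y).

Lemma continuous3_system_rhs Ps F b :
  continuity Ps -> continuous3 F -> continuous3 (system_rhs Ps F b).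
Proof.
intros HPs HF t x y eps Heps. destruct b; simpl.
- destruct (proj1 (continuity_pt_eps_delta _ _) (HPs y) eps Heps) as [d [Hd HPd]].
  exists d. split; auto.
- destruct (HF t x (Ps y) eps Heps) as [d1 [Hd1 HFd]].
  destruct (proj1 (continuity_pt_eps_delta _ _) (HPs y) d1 Hd1) as [d2 [Hd2 HPd]].
  exists (Rmin d1 d2). split; [now apply Rmin_pos|]. intros t' x' y' Ht Hx Hy.
  pose proof (Rmin_l d1 d2). pose proof (Rmin_r d1 d2).
  apply HFd; try lra. apply HPd. lra.
Qed.

Lemma mesh_small T eps : 0 < T -> 0 < eps ->
  exists N0 : nat, forall N, (N0 <= N)%nat -> T / INR (S N) < eps.
Proof.
intros HT He. destruct (archimed (T / eps)) as [Hup _].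
assert (Hz : (0 <= up (T / eps))%Z).
{ apply le_IZR. assert (0 < T / eps) by (apply Rdiv_lt_0_compat; lra). lra. }
exists (Z.to_nat (up (T / eps))). intros N HN.
apply le_INR in HN. rewrite INR_IZR_INZ, Z2Nat.id in HN by lia.
rewrite S_INR. apply (Rmult_lt_reg_r (INR N + 1)); [pose proof (pos_INR N); lra|].
unfold Rdiv at 1. rewrite Rmult_assoc, Rinv_l by (pose proof (pos_INR N); lra).
assert (T = (T / eps) * eps) by (field; lra).
assert (T / eps * eps < (INR N + 1) * eps) by (apply Rmult_lt_compat_r; lra). lra.
Qed.

Section EulerScheme.

Variables (T c K sg : R) (F : R -> R -> R -> R) (Ps : R -> R).
Hypothesis HT : 0 < T.
Hypothesis Hc : 0 <= c.
Hypothesis HK : 0 <= K.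
Hypothesis HF : forall t x y, Rabs (F t x y) <= c.
Hypothesis HFc : continuous3 F.
Hypothesis HP : forall y, Rabs (Ps y) <= K.
Hypothesis HPc : continuity Ps.
Hypothesis Hsg : sg <> 0.
Hypothesis Hsg_pos : forall y, 0 <= y -> 0 <= sg * Ps y.
Hypothesis Hsg_neg : forall y, y <= 0 -> sg * Ps y <= 0.

(* The explicit Euler scheme for [u' = Ps v], [v' = F t u (Ps v)], run backwards
   from time [T] with [v T = w] and [u T = Ps w]; index [k] is time [T - k h],
   component [true] is [u] and [false] is [v]. *)
Fixpoint euler (h w : R) (k : nat) (b : bool) : R :=
  match k with
  | O => if b then Ps w else w
  | S k => euler h w k b
           - h * system_rhs Ps F b (T - INR k * h) (euler h w k true) (euler h w k false)
  end.

Lemma system_rhs_bound b t x y : Rabs (system_rhs Ps F b t x y) <= K + c.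
Proof. destruct b; simpl; [pose proof (HP y)| pose proof (HF t x (Ps y))]; lra. Qed.

Lemma euler_continuous h k b : continuity (fun w => euler h w k b).
Proof.
revert b. induction k as [|k IH]; intros b; simpl.
- destruct b; [exact HPc| exact (derivable_continuous _ derivable_id)].
- apply (continuity_minus _ _ (IH b)).
  apply (continuity_scal (fun w => system_rhs Ps F b _ (euler h w k true) (euler h w k false))).
  apply continuity_comp3; auto. now apply continuous3_system_rhs.
Qed.

Lemma euler_step h w j b :
  0 <= h -> Rabs (euler h w (S j) b - euler h w j b) <= h * (K + c).
Proof.
intros Hh. simpl.
set (Y := system_rhs Ps F b (T - INR j * h) (euler h w j true) (euler h w j false)).
replace (euler h w j b - h * Y - euler h w j b) with (- (h * Y)) by ring.
rewrite Rabs_Ropp, Rabs_mult, (Rabs_pos_eq h Hh).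
apply Rmult_le_compat_l; auto. apply system_rhs_bound.
Qed.

Lemma euler_v_drift h w k : 0 <= h -> Rabs (euler h w k false - w) <= INR k * (h * c).
Proof.
intros Hh.
assert (Hstep : forall j, Rabs (euler h w (S j) false - euler h w j false) <= h * c).
{ intros j. simpl.
  set (Y := F (T - INR j * h) (euler h w j true) (Ps (euler h w j false))).
  replace (euler h w j false - h * Y - euler h w j false) with (- (h * Y)) by ring.
  rewrite Rabs_Ropp, Rabs_mult, (Rabs_pos_eq h Hh).
  apply Rmult_le_compat_l; auto. apply HF. }
pose proof (steps_dist _ _ Hstep k O) as Hk. simpl in Hk.
rewrite Rminus_0_r, (Rabs_pos_eq (INR k)) in Hk by apply pos_INR. exact Hk.
Qed.

(* Shooting from [w = c T] keeps [v >= 0] up to time 0, so [u] moves against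
   the sign of [sg]; from [w = - c T] it moves the other way. *)
Lemma euler_shot_sign h n : 0 <= h -> INR n * h <= T ->
  sg * (euler h (c * T) n true - Ps (c * T)) <= 0 /\
  0 <= sg * (euler h (- (c * T)) n true - Ps (- (c * T))).
Proof.
intros Hh. induction n as [|n IH]; intros Hn.
- simpl. unfold Rminus. rewrite !Rplus_opp_r, Rmult_0_r. lra.
- rewrite S_INR in Hn. destruct IH as [IH1 IH2]; [nra|].
  assert (Hdrift : INR n * (h * c) <= c * T) by nra.
  pose proof (Rabs_le_between _ _ (euler_v_drift h (c * T) n Hh)) as D1.
  pose proof (Rabs_le_between _ _ (euler_v_drift h (- (c * T)) n Hh)) as D2.
  assert (S1 := Hsg_pos (euler h (c * T) n false) ltac:(lra)).
  assert (S2 := Hsg_neg (euler h (- (c * T)) n false) ltac:(lra)).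
  simpl. split; nra.
Qed.

Definition mesh (N : nat) : R := T / INR (S N).

Lemma mesh_pos N : 0 < mesh N.
Proof. unfold mesh. apply Rdiv_lt_0_compat; [lra| apply lt_0_INR; lia]. Qed.

Lemma mesh_total N : INR (S N) * mesh N = T.
Proof. unfold mesh. field. apply not_0_INR; lia. Qed.

Lemma exists_periodic_shot N :
  exists w, - (c * T) <= w <= c * T /\ euler (mesh N) w (S N) true = Ps w.
Proof.
set (G := fun w => sg * (euler (mesh N) w (S N) true - Ps w)).
assert (HG : continuity G).
{ apply (continuity_scal (fun w => euler (mesh N) w (S N) true - Ps w)).
  apply (continuity_minus _ _ (euler_continuous _ _ _) HPc). }
assert (Hh := mesh_pos N). assert (Htot := mesh_total N).
destruct (euler_shot_sign (mesh N) (S N) ltac:(lra) ltac:(lra)) as [G1 G2].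
destruct (IVT_cor G (- (c * T)) (c * T) HG ltac:(nra) ltac:(unfold G; nra)) as [w [Hw HGw]].
exists w. split; auto. unfold G in HGw.
apply Rmult_integral in HGw. destruct HGw; [contradiction| lra].
Qed.

Definition shot (N : nat) : R :=
  proj1_sig (constructive_indefinite_description _ (exists_periodic_shot N)).

Lemma shot_spec N :
  - (c * T) <= shot N <= c * T /\ euler (mesh N) (shot N) (S N) true = Ps (shot N).
Proof. exact (proj2_sig (constructive_indefinite_description _ (exists_periodic_shot N))). Qed.

Definition scheme (N k : nat) (b : bool) : R := euler (mesh N) (shot N) k b.

Definition cell_index (N : nat) (s : R) : nat := grid_index T (mesh N) s (S N).

Lemma cell_index_in_cell N s : 0 <= s <= T -> in_cell T (mesh N) s (cell_index N s).
Proof. intros Hs. apply grid_index_in_cell; auto using mesh_pos, mesh_total. Qed.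

Lemma scheme_dist N k j b :
  Rabs (scheme N k b - scheme N j b) <= Rabs (INR k - INR j) * (mesh N * (K + c)).
Proof.
apply (steps_dist (fun k => scheme N k b)). intros i. apply euler_step, Rlt_le, mesh_pos.
Qed.

Lemma scheme_time N k : (k <= S N)%nat -> INR k * mesh N <= T.
Proof.
intros Hk. rewrite <- (mesh_total N). apply Rmult_le_compat_r; [apply Rlt_le, mesh_pos|].
now apply le_INR.
Qed.

Lemma scheme_v_bound N k : (k <= S N)%nat -> Rabs (scheme N k false) <= 2 * c * T.
Proof.
intros Hk. unfold scheme.
pose proof (Rabs_le_between _ _ (euler_v_drift (mesh N) (shot N) k (Rlt_le _ _ (mesh_pos N)))).
pose proof (scheme_time N k Hk). pose proof (mesh_pos N). pose proof (proj1 (shot_spec N)).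
assert (INR k * (mesh N * c) <= c * T) by nra.
apply Rabs_le. lra.
Qed.

Lemma scheme_bound N k b : (k <= S N)%nat -> Rabs (scheme N k b) <= K + c * T + T * (K + c).
Proof.
intros Hk. pose proof (scheme_dist N k O b) as Hd.
rewrite Rminus_0_r, (Rabs_pos_eq (INR k)) in Hd by apply pos_INR.
pose proof (scheme_time N k Hk). pose proof (mesh_pos N).
assert (INR k * (mesh N * (K + c)) <= T * (K + c)) by nra.
assert (Rabs (scheme N O b) <= K + c * T).
{ unfold scheme. destruct b; simpl.
  - pose proof (HP (shot N)). nra.
  - pose proof (proj1 (shot_spec N)). apply Rabs_le. nra. }
pose proof (Rabs_triang_inv (scheme N k b) (scheme N O b)). lra.
Qed.

Definition grid_limit (x : bool -> R -> R) : Prop :=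
  forall s t eps, 0 <= s <= T -> 0 <= t <= T -> 0 < eps ->
  exists N, mesh N < eps /\ forall b,
    Rabs (scheme N (cell_index N s) b - x b s) < eps /\
    Rabs (scheme N (cell_index N t) b - x b t) < eps.

Lemma exists_grid_limit : exists x, grid_limit x.
Proof.
set (g := fun N (i : bool * R) => scheme N (cell_index N (snd i)) (fst i)).
destruct (PointwiseCluster.exists_cluster_point _ g (K + c * T + T * (K + c)))
  as [p Hp].
{ intros N [b s]. apply scheme_bound, grid_index_le. }
exists (fun b s => p (b, s)). intros s t eps Hs Ht Heps.
destruct (mesh_small T eps HT Heps) as [N0 HN0].
destruct (Hp ((true, s) :: (false, s) :: (true, t) :: (false, t) :: nil) eps N0 Heps)
  as [N [HN Hclose]].
exists N. split; [now apply HN0|].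
intros b; split; [apply (Hclose (b, s)) | apply (Hclose (b, t))]; destruct b; simpl; tauto.
Qed.

Lemma scheme_near_cell N s t j b xs eta :
  0 <= s <= T -> 0 <= t <= T ->
  (Nat.min (cell_index N s) (cell_index N t) <= j <=
     Nat.max (cell_index N s) (cell_index N t))%nat ->
  Rabs (scheme N (cell_index N s) b - xs) < eta ->
  Rabs (scheme N j b - xs) < (Rabs (t - s) + mesh N) * (K + c) + eta /\
  Rabs (T - INR j * mesh N - s) < Rabs (t - s) + 2 * mesh N.
Proof.
intros Hs Ht Hj Hxs.
destruct (cell_between T (mesh N) s t _ _ j
            (cell_index_in_cell N s Hs) (cell_index_in_cell N t Ht) Hj) as [Hjs Htime].
split; auto.
set (ks := cell_index N s) in *.
pose proof (scheme_dist N j ks b).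
assert (Rabs (INR j - INR ks) * (mesh N * (K + c)) <= (Rabs (t - s) + mesh N) * (K + c)).
{ rewrite <- Rmult_assoc. apply Rmult_le_compat_r; lra. }
pose proof (Rabs_triang (scheme N j b - scheme N ks b) (scheme N ks b - xs)).
replace (scheme N j b - scheme N ks b + (scheme N ks b - xs)) with (scheme N j b - xs) in * by ring.
lra.
Qed.

Section Limit.

Variable x : bool -> R -> R.
Hypothesis Hx : grid_limit x.

Lemma limit_v_bound t : 0 <= t <= T -> Rabs (x false t) <= 2 * c * T.
Proof.
intros Ht. apply Rle_plus_epsilon. intros e He.
destruct (Hx t t e Ht Ht He) as [N [_ Hclose]]. destruct (Hclose false) as [Hxt _].
pose proof (scheme_v_bound N _ (grid_index_le T (mesh N) t (S N))).
pose proof (Rabs_triang_inv (x false t) (scheme N (cell_index N t) false)).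
rewrite Rabs_minus_sym in Hxt. unfold cell_index in *. lra.
Qed.

Lemma limit_periodic : x true T = x true 0.
Proof.
apply eq_of_dist_small. intros e He.
destruct (Hx T 0 (e / 2) ltac:(lra) ltac:(lra) ltac:(lra)) as [N [_ Hclose]].
destruct (Hclose true) as [HT' H0].
unfold cell_index in *. rewrite grid_index_start in HT' by auto using mesh_pos, mesh_total.
rewrite grid_index_end in H0 by auto using mesh_pos, mesh_total.
unfold scheme in H0. rewrite (proj2 (shot_spec N)) in H0.
replace (x true T - x true 0)
  with (- (scheme N 0 true - x true T) + (Ps (shot N) - x true 0)) by (unfold scheme; simpl; ring).
pose proof (Rabs_triang (- (scheme N 0 true - x true T)) (Ps (shot N) - x true 0)).
rewrite Rabs_Ropp in *. lra.
Qed.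

Lemma limit_initial : x true T = Ps (x false T).
Proof.
apply eq_of_dist_small. intros e He.
destruct (proj1 (continuity_pt_eps_delta _ _) (HPc (x false T)) (e / 2) ltac:(lra))
  as [d [Hd HPd]].
destruct (Hx T T (Rmin d (e / 2)) ltac:(lra) ltac:(lra) ltac:(now apply Rmin_pos; lra))
  as [N [_ Hclose]].
destruct (Hclose true) as [Hu _]. destruct (Hclose false) as [Hv _].
unfold cell_index in *. rewrite grid_index_start in Hu, Hv by auto using mesh_pos, mesh_total.
pose proof (Rmin_l d (e / 2)). pose proof (Rmin_r d (e / 2)).
assert (HPv : Rabs (Ps (scheme N 0 false) - Ps (x false T)) < e / 2) by (apply HPd; lra).
replace (x true T - Ps (x false T))
  with (- (scheme N 0 true - x true T) + (Ps (scheme N 0 false) - Ps (x false T)))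
  by (unfold scheme; simpl; ring).
pose proof (Rabs_triang (- (scheme N 0 true - x true T))
  (Ps (scheme N 0 false) - Ps (x false T))).
rewrite Rabs_Ropp in *. lra.
Qed.

Lemma limit_derivative b :
  has_derivative_on_interval (x b) (fun t => system_rhs Ps F b t (x true t) (x false t)) 0 T.
Proof.
intros s Hs eps Heps. set (M := K + c). assert (HM : 0 <= M) by (unfold M; lra).
set (D := system_rhs Ps F b s (x true s) (x false s)).
destruct (continuous3_system_rhs Ps F b HPc HFc s (x true s) (x false s) (eps / 2) ltac:(lra))
  as [d1 [Hd1 Hrhs]].
set (dl := d1 / (4 * (M + 1))).
assert (Hdl : 0 < dl) by (unfold dl; apply Rdiv_lt_0_compat; lra).
assert (Hdl1 : (M + 1) * (4 * dl) = d1) by (unfold dl; field; lra).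
assert (Hdl2 : 2 * dl * M + dl < d1) by nra.
assert (Hdl3 : 3 * dl < d1) by nra.
exists dl. split; auto. intros t Ht Hne Htd.
set (d := Rabs (t - s)). assert (Hd : 0 < d) by (apply Rabs_pos_lt; lra).
set (eta := Rmin dl (eps * d / (4 * (2 + eps + 2 * M)))).
assert (Heta : 0 < eta) by (apply Rmin_pos; auto; apply Rdiv_lt_0_compat; nra).
assert (Heta1 : eta <= dl) by apply Rmin_l.
assert (Heta2 : eta * (2 + eps + 2 * M) <= eps * d / 4).
{ apply Rle_trans with (eps * d / (4 * (2 + eps + 2 * M)) * (2 + eps + 2 * M)).
  - apply Rmult_le_compat_r; [lra| apply Rmin_r].
  - right; field; lra. }
destruct (Hx s t eta Hs Ht Heta) as [N [Hmesh Hclose]].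
assert (Hslopes : forall j,
    (Nat.min (cell_index N s) (cell_index N t) <= j <
       Nat.max (cell_index N s) (cell_index N t))%nat ->
    Rabs (system_rhs Ps F b (T - INR j * mesh N) (scheme N j true) (scheme N j false) - D)
      <= eps / 2).
{ assert (Hdd : d < dl) by exact Htd.
  assert (Hspread : (d + mesh N) * M <= (2 * dl) * M) by (apply Rmult_le_compat_r; lra).
  intros j Hj. apply Rlt_le, Hrhs.
  all: pose proof (scheme_near_cell N s t j true (x true s) eta Hs Ht ltac:(lia)
         (proj1 (Hclose true))) as [Hu Htime].
  all: pose proof (scheme_near_cell N s t j false (x false s) eta Hs Ht ltac:(lia)
         (proj1 (Hclose false))) as [Hv _].
  all: fold d M in Hu, Hv, Htime; lra. }
pose proof (euler_increment (fun k => scheme N k b)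
  (fun j => system_rhs Ps F b (T - INR j * mesh N) (scheme N j true) (scheme N j false))
  (x b) T (mesh N) D M (eps / 2) eta s t (cell_index N s) (cell_index N t)
  (mesh_pos N) ltac:(lra) (system_rhs_bound b s _ _) (fun j => eq_refl) Hslopes
  (cell_index_in_cell N s Hs) (cell_index_in_cell N t Ht)
  (proj1 (Hclose b)) (proj2 (Hclose b))) as Hinc.
apply diff_quotient_lt; auto. fold d in Hinc |- *.
assert (mesh N * (eps / 2) <= eta * (eps / 2)) by (apply Rmult_le_compat_r; lra).
assert (M * mesh N <= M * eta) by (apply Rmult_le_compat_l; lra).
nra.
Qed.

End Limit.

Theorem euler_limit_solution : exists x : bool -> R -> R,
  (forall t, 0 <= t <= T -> Rabs (x false t) <= 2 * c * T) /\
  (forall b, has_derivative_on_interval (x b)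
               (fun t => system_rhs Ps F b t (x true t) (x false t)) 0 T) /\
  x true T = x true 0 /\ x true T = Ps (x false T).
Proof.
destruct exists_grid_limit as [x Hx]. exists x.
split; [|split; [|split]].
- exact (limit_v_bound x Hx).
- exact (limit_derivative x Hx).
- exact (limit_periodic x Hx).
- exact (limit_initial x Hx).
Qed.

End EulerScheme.

Lemma is_solution_of_system (phi Ps : R -> R) (f F : R -> R -> R -> R) (T : R)
    (x : bool -> R -> R) :
  continuity Ps -> continuous3 F ->
  (forall t y z, 0 <= t <= T -> F t y z = f t y z) ->
  (forall t, 0 <= t <= T -> phi (Ps (x false t)) = x false t) ->
  (forall b, has_derivative_on_interval (x b)
               (fun t => system_rhs Ps F b t (x true t) (x false t)) 0 T) ->
  x true T = x true 0 -> x true T = Ps (x false T) ->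
  is_solution phi f T (x true).
Proof.
intros HPs HF HFf Hphi Hder Hper Hinit.
assert (Hcont : forall b, continuous_on_interval
                  (fun t => system_rhs Ps F b t (x true t) (x false t)) 0 T).
{ intros b. apply continuous_on_interval_comp3; [now apply continuous3_system_rhs|..];
  apply (derivative_continuous _ _ _ _ (Hder _)). }
exists (fun t => system_rhs Ps F true t (x true t) (x false t)),
  (fun t => system_rhs Ps F false t (x true t) (x false t)).
repeat split; auto.
- intros t Ht eps Heps. destruct (Hder false t Ht eps Heps) as [d [Hd Hq]].
  exists d. split; auto. intros s Hs Hst Hsd. simpl. rewrite !Hphi by auto. now apply Hq.
- intros t Ht. simpl. now rewrite HFf.
- now rewrite <- Hper.
Qed.

Section ClampedInverse.

Variables (a r : R) (phi psi : R -> R).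
Hypothesis Hr : 0 < r < a.
Hypothesis Hphi : continuity phi.
Hypothesis Hpsi_phi : forall y, psi (phi y) = y.
Hypothesis Hphi_psi : forall z, - a < z < a -> phi (psi z) = z.
Hypothesis Hpsi : forall z, - a < z < a -> continuity_pt psi z.
Hypothesis Hphi0 : phi 0 = 0.

Lemma psi0 : psi 0 = 0.
Proof. rewrite <- Hphi0 at 1. apply Hpsi_phi. Qed.

Lemma continuity_clamped_psi : continuity (fun y => psi (clamp (- r) r y)).
Proof. apply continuity_clamp_comp; [lra|]. intros z Hz. apply Hpsi. lra. Qed.

Lemma clamped_psi_eq0 y : psi (clamp (- r) r y) = 0 -> y = 0.
Proof.
intros Hy. apply (clamp_eq0 (- r) r); [lra|].
rewrite <- (Hphi_psi (clamp (- r) r y)), Hy by (pose proof (clamp_between (- r) r y); lra).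
exact Hphi0.
Qed.

Lemma psi_opposite_signs : psi r * psi (- r) < 0.
Proof.
assert (Hp : phi (psi r) = r) by (apply Hphi_psi; lra).
assert (Hq : phi (psi (- r)) = - r) by (apply Hphi_psi; lra).
assert (Hphi_eq0 : forall y, phi y = 0 -> y = 0)
  by (intros y Hy; rewrite <- (Hpsi_phi y), Hy; exact psi0).
destruct (Rlt_le_dec 0 (psi r * psi (- r))) as [Hpos|Hle].
- apply (sign_preserving phi) in Hpos; auto. rewrite Hp, Hq in Hpos. nra.
- destruct Hle as [|Hzero]; auto. apply Rmult_integral in Hzero.
  destruct Hzero as [Hzero|Hzero]; rewrite Hzero, Hphi0 in *; lra.
Qed.

Lemma clamped_psi_sign_pos y : 0 <= y -> 0 <= psi r * psi (clamp (- r) r y).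
Proof.
intros Hy. destruct Hy as [Hy| <-].
- rewrite <- (clamp_id (- r) r r) at 1 by lra.
  apply Rlt_le, (sign_preserving _ r y continuity_clamped_psi clamped_psi_eq0). nra.
- rewrite clamp_id, psi0 by lra. lra.
Qed.

Lemma clamped_psi_sign_neg y : y <= 0 -> psi r * psi (clamp (- r) r y) <= 0.
Proof.
intros Hy. destruct Hy as [Hy| ->].
- assert (Hsame := sign_preserving _ (- r) y continuity_clamped_psi clamped_psi_eq0
    ltac:(nra)).
  cbv beta in Hsame. rewrite (clamp_id (- r) r (- r)) in Hsame by lra.
  pose proof psi_opposite_signs.
  assert (0 < psi (- r) * psi (- r)) by nra. nra.
- rewrite clamp_id, psi0 by lra. lra.
Qed.

End ClampedInverse.

Theorem theorem4p1 (T a : R) (phi : R -> R) (f : R -> R -> R -> R) :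
  0 < T -> 0 < a ->
  homeomorphism_onto_interval phi a -> phi 0 = 0 ->
  continuous_on_strip f T ->
  (exists c : R, c < a / (2 * T) /\
     forall t x y, 0 <= t <= T -> Rabs (f t x y) <= c) ->
  exists u : R -> R, is_solution phi f T u.
Proof.
intros HT Ha [Hphi [_ [psi [Hpsi_phi [Hphi_psi Hpsi]]]]] Hphi0 Hf [c [Hca Hfc]].
assert (Hc : 0 <= c) by (pose proof (Hfc 0 0 0 ltac:(lra)); pose proof (Rabs_pos (f 0 0 0)); lra).
assert (HcT : 2 * c * T < a).
{ apply (Rmult_lt_compat_r (2 * T)) in Hca; [|lra].
  unfold Rdiv in Hca. rewrite Rmult_assoc, Rinv_l in Hca by lra. lra. }
set (r := (2 * c * T + a) / 2).
assert (Hr : 0 < r < a) by (unfold r; nra).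
assert (HrcT : 2 * c * T <= r) by (unfold r; lra).
destruct (bounded_on_segment psi (- r) r ltac:(lra) ltac:(intros z Hz; apply Hpsi; lra))
  as [K [HK HpsiK]].
set (Ps := fun y => psi (clamp (- r) r y)).
set (F := fun t => f (clamp 0 T t)).
destruct (euler_limit_solution T c K (psi r) F Ps) as [x [Hxv [Hder [Hper Hinit]]]]; auto.
- intros t y z. apply Hfc, clamp_between. lra.
- now apply continuous3_clamp; [lra|].
- intros y. apply HpsiK, clamp_between. lra.
- now apply (continuity_clamped_psi a).
- pose proof (psi_opposite_signs a r phi psi Hr Hphi Hpsi_phi Hphi_psi Hphi0). nra.
- intros y. now apply (clamped_psi_sign_pos a r phi psi).
- intros y. now apply (clamped_psi_sign_neg a r phi psi).
- exists (x true). apply (is_solution_of_system phi Ps f F T x); auto.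
  + now apply (continuity_clamped_psi a).
  + now apply continuous3_clamp; [lra|].
  + intros t y z Ht. unfold F. now rewrite clamp_id.
  + intros t Ht. pose proof (Rabs_le_between _ _ (Hxv t Ht)).
    unfold Ps. rewrite clamp_id by lra. apply Hphi_psi. lra.
Qed.
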